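(* For every $\delta>0$ there exist $n\ge1$, a pool $\mathcal D=\{(p_i,t_i)\}_{i=1}^n$ with $p_i\in[0,1]$, $t_i>0$, and a budget $T>0$, such that the greedy backward selection strategy based on the usefulness values $u_i=p_i/t_i$ (defined in the context) outputs an ensemble $S$ with majority-voting accuracy $q(S)\le 1/2+\delta$, while there is an index set $\mathcal L\subseteq\{1,\dots,n\}$ with $\sum_{i\in\mathcal L}t_i\le T$ and $q(\mathcal L)\ge 1-\delta$; i.e., its error (optimal constrained accuracy minus output accuracy) can be arbitrarily close to $1/2$.
   Context: A pool consists of candidate members $i=1,\dots,n$, each with accuracy $p_i\in[0,1]$ and cost $t_i>0$; a budget $T>0$ is given; the usefulness of member $i$ is $u_i=p_i/t_i$. For a nonempty index set $\mathcal L$ with $|\mathcal L|=\ell$, the (majority voting) accuracy is $q(\mathcal L)=\sum_{k=\lfloor \ell/2\rfloor+1}^{\ell}\sum_{\mathcal I\subseteq\mathcal L,|\mathcal I|=k}\prod_{i\in\mathcal I}p_i\prod_{j\in\mathcal L\setminus\mathcal I}(1-p_j)$. Greedy backward selection by usefulness: start with $S=\{1,\dots,n\}$; while $\sum_{i\in S}t_i>T$ and $|S|>1$, remove from $S$ a member with smallest usefulness $u_i$; afterwards, while $|S|>1$ and removing a member of smallest usefulness strictly increases $q(S)$, remove it; output $S$. *)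

From HB Require Import structures.
From mathcomp Require Import all_boot all_order all_algebra.
From mathcomp Require Import reals.
Set Implicit Arguments. Unset Strict Implicit. Unset Printing Implicit Defensive.
Import Order.TTheory GRing.Theory Num.Theory.
Local Open Scope ring_scope.

Section Ensemble.
Variables (R : realType) (n : nat).
Implicit Types (p t : 'I_n -> R) (S L : {set 'I_n}).

(* majority-voting accuracy: sum over I ⊆ L with |I| >= floor(|L|/2)+1,
   i.e. 2|I| > |L| *)
Definition q p L : R :=
  \sum_(I in powerset L | (#|L| < 2 * #|I|)%N)
     ((\prod_(i in I) p i) * \prod_(j in L :\: I) (1 - p j)).

Definition cost t S : R := \sum_(i in S) t i.

Definition usefulness p t (i : 'I_n) : R := p i / t i.

Definition min_use p t S (i : 'I_n) : Prop :=
  i \in S /\ forall j, j \in S -> usefulness p t i <= usefulness p t j.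

(* second phase: while |S|>1 and removing a member of smallest usefulness
   strictly increases q(S), remove it.  Ties are resolved arbitrarily
   (the relation covers every tie-breaking rule). *)
Inductive phase2 p t : {set 'I_n} -> {set 'I_n} -> Prop :=
| ph2_single S : (#|S| <= 1)%N -> phase2 p t S S
| ph2_stop S i : (1 < #|S|)%N -> min_use p t S i -> q p (S :\ i) <= q p S ->
    phase2 p t S S
| ph2_step S i S' : (1 < #|S|)%N -> min_use p t S i -> q p S < q p (S :\ i) ->
    phase2 p t (S :\ i) S' -> phase2 p t S S'.

Inductive phase1 p t (T : R) : {set 'I_n} -> {set 'I_n} -> Prop :=
| ph1_stop S S' : ~ (T < cost t S /\ (1 < #|S|)%N) -> phase2 p t S S' ->
    phase1 p t T S S'
| ph1_step S i S' : T < cost t S -> (1 < #|S|)%N -> min_use p t S i ->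
    phase1 p t T (S :\ i) S' -> phase1 p t T S S'.

Definition greedy_output p t (T : R) S : Prop := phase1 p t T setT S.

End Ensemble.

(* Usefulness p/t rewards cheapness, so it prefers a cheap coin-flipping
   member (p = 1/2, t = 1/4, u = 2) to an infallible but expensive one
   (p = 1, t = 1, u = 1).  With budget T = 1 the pair is too expensive, the
   greedy strategy discards the infallible member and is left with accuracy
   1/2, whereas the infallible member alone fits the budget and has
   accuracy 1: the error is exactly 1/2, whatever delta is. *)
From HB Require Import structures.
From mathcomp Require Import all_boot all_order all_algebra.
From mathcomp Require Import reals.
From mathcomp Require Import lra.
Import Order.TTheory GRing.Theory Num.Theory.
Local Open Scope ring_scope.

Section GreedySelection.
Context {R : realType} {n : nat} {p t : 'I_n -> R} {T : R}.

Lemma q_set1 i : q p [set i] = p i.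
Proof.
rewrite /q (big_pred1 [set i]); first by rewrite big_set1 setDv big_set0 mulr1.
move=> I /=; rewrite powersetE cards1.
apply/andP/eqP => [[]|->]; last by rewrite subxx cards1.
by rewrite subset1 => /orP[/eqP //|/eqP ->]; rewrite cards0.
Qed.

Lemma phase2_small {S S' : {set 'I_n}} : (#|S| <= 1)%N -> phase2 p t S S' -> S' = S.
Proof. by move=> small h; case: h small => [//|S0 i|S0 i S1] big; rewrite leqNgt big. Qed.

Lemma phase1_small {S S' : {set 'I_n}} : (#|S| <= 1)%N -> phase1 p t T S S' <-> S' = S.
Proof.
move=> small; split => [h|->].
  case: h small => [S0 S1 _ ph2 small|S0 i S1 _ big]; last by rewrite leqNgt big.
  exact: phase2_small small ph2.
by apply: ph1_stop; [rewrite ltnNge small => -[] | exact: ph2_single].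
Qed.

Lemma phase1_over_budget {S S' : {set 'I_n}} : T < cost t S -> (1 < #|S|)%N ->
  phase1 p t T S S' ->
  exists2 i, min_use p t S i & phase1 p t T (S :\ i) S'.
Proof.
move=> over big h.
by case: h over big => [S0 S1 stop _ over big|S0 i S1 _ _ imin next]; [case: stop | exists i].
Qed.

Lemma min_use_unique {S : {set 'I_n}} {i j : 'I_n} :
  i \in S -> (forall k, k \in S -> k != i -> usefulness p t i < usefulness p t k) ->
  min_use p t S j -> j = i.
Proof.
move=> iS ilt [jS jmin]; apply/eqP; apply: contraT => ji.
by have := jmin i iS; rewrite leNgt ilt.
Qed.

End GreedySelection.

Section TwoMemberPool.
Variable R : realType.

Definition pool_accuracy (i : 'I_2) : R := if i == ord0 then 1 else 1 / 2.
Definition pool_cost (i : 'I_2) : R := if i == ord0 then 1 else 1 / 4.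

Lemma setT_ord2 : [set: 'I_2] = [set ord0; ord_max].
Proof. by apply/setP => -[[|[|k]] lt_k]; rewrite !inE. Qed.

Lemma setT_ord2D0 : [set: 'I_2] :\ ord0 = [set ord_max].
Proof. by rewrite setT_ord2 setU1K // inE. Qed.

Lemma pool_over_budget : 1 < cost pool_cost [set: 'I_2].
Proof.
rewrite /cost setT_ord2 big_setU1 ?inE // big_set1 /pool_cost /=; lra.
Qed.

Lemma pool_min_use i : min_use pool_accuracy pool_cost [set: 'I_2] i <-> i = ord0.
Proof.
have u0 : usefulness pool_accuracy pool_cost ord0 = 1.
  by rewrite /usefulness /pool_accuracy /pool_cost /=; lra.
have u1 : usefulness pool_accuracy pool_cost ord_max = 2.
  by rewrite /usefulness /pool_accuracy /pool_cost /=; lra.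
have u0_min k : k \in [set: 'I_2] -> k != ord0 ->
    usefulness pool_accuracy pool_cost ord0 < usefulness pool_accuracy pool_cost k.
  by rewrite setT_ord2 !inE => /orP[->//|/eqP->] _; rewrite u0 u1; lra.
split; first exact: min_use_unique (in_setT _) u0_min.
move=> ->; split=> [|k kT]; first exact: in_setT.
by case: (eqVneq k ord0) => [->//|k0]; apply/ltW/u0_min.
Qed.

Lemma pool_greedy_output S :
  greedy_output pool_accuracy pool_cost 1 S <-> S = [set ord_max].
Proof.
have two : (1 < #|[set: 'I_2]|)%N by rewrite cardsT card_ord.
have small : (#|[set: 'I_2] :\ ord0| <= 1)%N by rewrite setT_ord2D0 cards1.
split.
  case/(phase1_over_budget pool_over_budget two) => i /pool_min_use -> next.
  by rewrite -setT_ord2D0; exact: (iffLR (phase1_small small) next).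
move=> ->; apply: (ph1_step (i := ord0) pool_over_budget two).
  exact/pool_min_use.
by rewrite -setT_ord2D0; exact/(iffRL (phase1_small small)).
Qed.

End TwoMemberPool.

Theorem proposition3 (R : realType) (delta : R) (hdelta : 0 < delta) :
  exists (n : nat) (p t : 'I_n -> R) (T : R),
    [/\ (0 < n)%N,
        (forall i, 0 <= p i <= 1),
        (forall i, 0 < t i),
        0 < T &
    [/\ (exists S, greedy_output p t T S),
        (forall S, greedy_output p t T S -> q p S <= 1 / 2 + delta) &
        (exists L : {set 'I_n},
            [/\ L != set0, cost t L <= T & 1 - delta <= q p L])]].
Proof.
exists 2%N, (@pool_accuracy R), (@pool_cost R), 1; split => //.
- by move=> i; rewrite /pool_accuracy; case: ifP => _; apply/andP; split; lra.
- by move=> i; rewrite /pool_cost; case: ifP => _; lra.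
split.
- by exists [set ord_max]; apply/pool_greedy_output.
- by move=> S /pool_greedy_output ->; rewrite q_set1 /pool_accuracy /=; lra.
- exists [set ord0]; split.
  + by apply/set0Pn; exists ord0; rewrite inE.
  + by rewrite /cost big_set1 /pool_cost /=; lra.
  + by rewrite q_set1 /pool_accuracy /=; lra.
Qed.
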